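(* In a strongly causal OPT, let $\rho\in\mathsf{St}_1(\mathrm{A})$ and $\mathcal C\in\mathsf{Tr}_1(\mathrm{A}\to\mathrm{A})$. (i) If every state of the theory has a purification, then $F(\rho,\mathcal C)=\inf_{\Phi\in P_\rho}F[\Phi,(\mathcal C\boxtimes\mathcal I)(\Phi)]^2$. (ii) If moreover the theory satisfies essential uniqueness of purification and atomicity of parallel composition of states, then $F(\rho,\mathcal C)=F[\Phi,(\mathcal C\boxtimes\mathcal I)(\Phi)]^2$ for every $\Phi\in P_\rho$.
   Context: Framework (operational probabilistic theory, OPT): each system $\mathrm{A}$ has states $\mathsf{St}(\mathrm{A})$ (normalized ones $\mathsf{St}_1(\mathrm{A})$), effects $\mathsf{Eff}(\mathrm{A})$, transformations $\mathsf{Tr}(\mathrm{A}\to\mathrm{B})$ (channels $\mathsf{Tr}_1$), sequential ($\circ$) and parallel ($\boxtimes$) composition, pairing $(a|\rho)$. Strong causality: for every test $\{\mathcal A_i\}$ and tests $\{\mathcal B^i_j\}_j$, $\{\mathcal B^i_j\circ\mathcal A_i\}$ is a test; unique deterministic effect $e_{\mathrm{A}}$. A state is pure if its only refinements (collections of states in a preparation test summing to it) are of the form $\lambda_i\rho$. A dilation of $\rho\in\mathsf{St}(\mathrm{A})$ is $\Psi\in\mathsf{St}(\mathrm{A}\mathrm{C})$ with $(\mathcal I_{\mathrm{A}}\boxtimes e_{\mathrm{C}})\Psi=\rho$; $D_\rho$ the set of dilations; a purification is a pure dilation; $P_\rho$ the set of purifications. Essential uniqueness of purification: for every $\rho$ with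 $P_\rho\ne\emptyset$ and all $\Phi,\Psi\in P_\rho\cap\mathsf{St}(\mathrm{A}\mathrm{B})$ there is a reversible $\mathcal U\in\mathsf{Tr}_1(\mathrm{B}\to\mathrm{B})$ with $\Psi=(\mathcal I_{\mathrm{A}}\boxtimes\mathcal U)\Phi$. Atomicity of parallel composition of states: $\phi\boxtimes\psi$ is pure whenever $\phi,\psi$ are pure. Fidelity: for $\rho,\sigma\in\mathsf{St}_1(\mathrm{A})$, $F(\rho,\sigma):=\inf_{\{a_i\}}\sum_i\sqrt{(a_i|\rho)(a_i|\sigma)}$, infimum over observation tests $\{a_i\}$ of $\mathrm{A}$. Correlation fidelity: $F(\rho,\mathcal C):=\inf_{\Psi\in D_\rho}F[\Psi,(\mathcal C\boxtimes\mathcal I)(\Psi)]^2$. *)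

From HB Require Import structures.
From mathcomp Require Import all_boot all_order all_algebra.
From mathcomp Require Import classical_sets reals.
From Stdlib Require List Permutation.

Set Implicit Arguments.
Unset Strict Implicit.
Unset Printing Implicit Defensive.
Import Order.TTheory GRing.Theory Num.Theory.
Local Open Scope ring_scope.
Local Open Scope classical_set_scope.

(* Transformations Tr A B are the elements of the real linear span of  *)
(* the events (sums = coarse-grainings, real multiples); the actual     *)
(* events are those occurring in some test (predicate [Ev]).            *)
(* States of A = Tr I A, effects of A = Tr A I, scalars = Tr I I.       *)

Record OPTops (R : realType) := {
  Sys : Type;
  sI : Sys;                                   (* trivial system *)
  sP : Sys -> Sys -> Sys;
  Tr : Sys -> Sys -> Type;
  comp : forall A B C, Tr B C -> Tr A B -> Tr A C;
  idT : forall A, Tr A A;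
  par : forall A B C D, Tr A B -> Tr C D -> Tr (sP A C) (sP B D);
  addT : forall A B, Tr A B -> Tr A B -> Tr A B;
  zeroT : forall A B, Tr A B;
  sclT : forall A B, R -> Tr A B -> Tr A B;
  Test : forall A B, list (Tr A B) -> Prop;
  prob : Tr sI sI -> R;
  lu : forall A, Tr (sP sI A) A;
  luI : forall A, Tr A (sP sI A);
  ru : forall A, Tr (sP A sI) A;
  ruI : forall A, Tr A (sP A sI);
  asc : forall A B C, Tr (sP (sP A B) C) (sP A (sP B C));
  ascI : forall A B C, Tr (sP A (sP B C)) (sP (sP A B) C);
  sw : forall A B, Tr (sP A B) (sP B A)
}.

Arguments sI {R T} : rename.
Arguments sP {R T} _ _ : rename.
Arguments Tr {R T} _ _ : rename.
Arguments comp {R T A B C} _ _ : rename.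
Arguments idT {R T} A : rename.
Arguments par {R T A B C D} _ _ : rename.
Arguments addT {R T A B} _ _ : rename.
Arguments zeroT {R T A B} : rename.
Arguments sclT {R T A B} _ _ : rename.
Arguments Test {R T A B} _ : rename.
Arguments prob {R T} _ : rename.
Arguments lu {R T} A : rename.
Arguments luI {R T} A : rename.
Arguments ru {R T} A : rename.
Arguments ruI {R T} A : rename.
Arguments asc {R T} A B C : rename.
Arguments ascI {R T} A B C : rename.
Arguments sw {R T} A B : rename.

Section Basic.
Variables (R : realType) (T : OPTops R).

Definition Ev (A B : Sys T) (f : Tr A B) : Prop :=
  exists l : list (Tr A B), Test l /\ List.In f l.

Definition IsState (A : Sys T) (rho : Tr sI A) : Prop := Ev rho.
Definition IsChannel (A B : Sys T) (f : Tr A B) : Prop := Test [:: f].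
Definition NormState (A : Sys T) (rho : @Tr R T sI A) : Prop := Test [:: rho].

Definition pairing (A : Sys T) (a : Tr A sI) (rho : Tr sI A) : R := prob (comp a rho).

Definition sumT (A B : Sys T) (s : list (Tr A B)) : Tr A B :=
  foldr (@addT R T A B) zeroT s.

Definition Reversible (A B : Sys T) (U : Tr A B) : Prop :=
  IsChannel U /\ exists V : Tr B A, IsChannel V /\
    comp V U = idT A /\ comp U V = idT B.

Definition Pure (A : Sys T) (rho : Tr sI A) : Prop :=
  Ev rho /\
  forall (l : list (Tr sI A)) (m : bitseq),
    Test l -> sumT (mask m l) = rho ->
    forall sigma, List.In sigma (mask m l) -> exists lam : R, sigma = sclT lam rho.

(* parallel composition of states (I identified with II) *)
Definition stPar (A B : Sys T) (phi : Tr sI A) (psi : Tr sI B) : Tr sI (sP A B) :=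
  comp (par phi psi) (luI sI).

Definition Dilation (A C : Sys T) (rho : Tr sI A) (Psi : Tr sI (sP A C)) : Prop :=
  IsState Psi /\
  exists e : Tr C sI, Test [:: e] /\ comp (ru A) (comp (par (idT A) e) Psi) = rho.

Definition Purification (A C : Sys T) (rho : Tr sI A) (Psi : Tr sI (sP A C)) : Prop :=
  Dilation rho Psi /\ Pure Psi.

Definition fidelity (A : Sys T) (rho sigma : Tr sI A) : R :=
  inf [set x : R | exists l : list (Tr A sI), Test l /\
        x = \sum_(a <- l) Num.sqrt (pairing a rho * pairing a sigma)].

Definition applyA (A C : Sys T) (Ch : Tr A A) (Psi : Tr sI (sP A C)) : Tr sI (sP A C) :=
  comp (par Ch (idT C)) Psi.

Definition corrFid (A : Sys T) (rho : Tr sI A) (Ch : Tr A A) : R :=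
  inf [set x : R | exists (C : Sys T) (Psi : Tr sI (sP A C)),
        Dilation rho Psi /\ x = (fidelity Psi (applyA Ch Psi)) ^+ 2].

Definition corrFidPur (A : Sys T) (rho : Tr sI A) (Ch : Tr A A) : R :=
  inf [set x : R | exists (C : Sys T) (Phi : Tr sI (sP A C)),
        Purification rho Phi /\ x = (fidelity Phi (applyA Ch Phi)) ^+ 2].

Record OPTlaws : Prop := {
  compA : forall (A B C D : Sys T) (f : Tr A B) (g : Tr B C) (h : Tr C D),
      comp h (comp g f) = comp (comp h g) f;
  comp1T : forall (A B : Sys T) (f : Tr A B), comp (idT B) f = f;
  compT1 : forall (A B : Sys T) (f : Tr A B), comp f (idT A) = f;
  par_comp : forall (A B C D E F : Sys T) (f1 : Tr A B) (g1 : Tr B C)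
      (f2 : Tr D E) (g2 : Tr E F),
      par (comp g1 f1) (comp g2 f2) = comp (par g1 g2) (par f1 f2);
  par_id : forall A B : Sys T, par (idT A) (idT B) = idT (sP A B);
  lu_inv1 : forall A : Sys T, comp (lu A) (luI A) = idT A;
  lu_inv2 : forall A : Sys T, comp (luI A) (lu A) = idT (sP sI A);
  ru_inv1 : forall A : Sys T, comp (ru A) (ruI A) = idT A;
  ru_inv2 : forall A : Sys T, comp (ruI A) (ru A) = idT (sP A sI);
  asc_inv1 : forall A B C : Sys T, comp (asc A B C) (ascI A B C) = idT (sP A (sP B C));
  asc_inv2 : forall A B C : Sys T, comp (ascI A B C) (asc A B C) = idT (sP (sP A B) C);
  sw_inv : forall A B : Sys T, comp (sw B A) (sw A B) = idT (sP A B);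
  lu_nat : forall (A B : Sys T) (f : Tr A B),
      comp (lu B) (par (idT sI) f) = comp f (lu A);
  ru_nat : forall (A B : Sys T) (f : Tr A B),
      comp (ru B) (par f (idT sI)) = comp f (ru A);
  asc_nat : forall (A A' B B' C C' : Sys T) (f : Tr A A') (g : Tr B B') (h : Tr C C'),
      comp (asc A' B' C') (par (par f g) h) = comp (par f (par g h)) (asc A B C);
  sw_nat : forall (A B C D : Sys T) (f : Tr A B) (g : Tr C D),
      comp (sw B D) (par f g) = comp (par g f) (sw A C);
  triangle : forall A B : Sys T,
      comp (par (idT A) (lu B)) (asc A sI B) = par (ru A) (idT B);
  pentagon : forall A B C D : Sys T,
      comp (asc A B (sP C D)) (asc (sP A B) C D) =
      comp (par (idT A) (asc B C D)) (comp (asc A (sP B C) D) (par (asc A B C) (idT D)));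
  hexagon : forall A B C : Sys T,
      comp (asc B C A) (comp (sw A (sP B C)) (asc A B C)) =
      comp (par (idT B) (sw A C)) (comp (asc B A C) (par (sw A B) (idT C)));
  addTC : forall (A B : Sys T) (f g : Tr A B), addT f g = addT g f;
  addTA : forall (A B : Sys T) (f g h : Tr A B), addT f (addT g h) = addT (addT f g) h;
  add0T : forall (A B : Sys T) (f : Tr A B), addT zeroT f = f;
  scl1T : forall (A B : Sys T) (f : Tr A B), sclT 1 f = f;
  sclTA : forall (A B : Sys T) (a b : R) (f : Tr A B), sclT a (sclT b f) = sclT (a * b) f;
  sclTDl : forall (A B : Sys T) (a b : R) (f : Tr A B),
      sclT (a + b) f = addT (sclT a f) (sclT b f);
  sclTDr : forall (A B : Sys T) (a : R) (f g : Tr A B),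
      sclT a (addT f g) = addT (sclT a f) (sclT a g);
  compDl : forall (A B C : Sys T) (f : Tr A B) (g h : Tr B C),
      comp (addT g h) f = addT (comp g f) (comp h f);
  compDr : forall (A B C : Sys T) (f h : Tr A B) (g : Tr B C),
      comp g (addT f h) = addT (comp g f) (comp g h);
  comp0l : forall (A B C : Sys T) (f : Tr A B), comp (zeroT : Tr B C) f = zeroT;
  comp0r : forall (A B C : Sys T) (g : Tr B C), comp g (zeroT : Tr A B) = zeroT;
  compZl : forall (A B C : Sys T) (a : R) (f : Tr A B) (g : Tr B C),
      comp (sclT a g) f = sclT a (comp g f);
  compZr : forall (A B C : Sys T) (a : R) (f : Tr A B) (g : Tr B C),
      comp g (sclT a f) = sclT a (comp g f);
  parDl : forall (A B C D : Sys T) (f g : Tr A B) (h : Tr C D),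
      par (addT f g) h = addT (par f h) (par g h);
  parDr : forall (A B C D : Sys T) (f : Tr A B) (g h : Tr C D),
      par f (addT g h) = addT (par f g) (par f h);
  par0l : forall (A B C D : Sys T) (h : Tr C D), par (zeroT : Tr A B) h = zeroT;
  par0r : forall (A B C D : Sys T) (f : Tr A B), par f (zeroT : Tr C D) = zeroT;
  parZl : forall (A B C D : Sys T) (a : R) (f : Tr A B) (h : Tr C D),
      par (sclT a f) h = sclT a (par f h);
  parZr : forall (A B C D : Sys T) (a : R) (f : Tr A B) (h : Tr C D),
      par f (sclT a h) = sclT a (par f h);
  prob_add : forall s t : Tr (@sI R T) (@sI R T), prob (addT s t) = prob s + prob t;
  prob_scl : forall (a : R) (s : Tr (@sI R T) (@sI R T)), prob (sclT a s) = a * prob s;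
  prob_comp : forall s t : Tr (@sI R T) (@sI R T), prob (comp s t) = prob s * prob t;
  prob_inj : forall s t : Tr (@sI R T) (@sI R T), prob s = prob t -> s = t;
  prob_ge0 : forall s : Tr (@sI R T) (@sI R T), Ev s -> 0 <= prob s;
  prob_test : forall l : list (Tr (@sI R T) (@sI R T)), Test l -> \sum_(s <- l) prob s = 1;
  test_id : forall A : Sys T, Test [:: idT A];
  test_lu : forall A : Sys T, Test [:: lu A];
  test_luI : forall A : Sys T, Test [:: luI A];
  test_ru : forall A : Sys T, Test [:: ru A];
  test_ruI : forall A : Sys T, Test [:: ruI A];
  test_asc : forall A B C : Sys T, Test [:: asc A B C];
  test_ascI : forall A B C : Sys T, Test [:: ascI A B C];
  test_sw : forall A B : Sys T, Test [:: sw A B];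
  test_seq : forall (A B C : Sys T) (l : list (Tr A B)) (m : list (Tr B C)),
      Test l -> Test m -> Test [seq comp g f | f <- l, g <- m];
  test_par : forall (A B C D : Sys T) (l : list (Tr A B)) (m : list (Tr C D)),
      Test l -> Test m -> Test [seq par f g | f <- l, g <- m];
  test_perm : forall (A B : Sys T) (l l' : list (Tr A B)),
      Test l -> Permutation.Permutation l l' -> Test l';
  test_cg : forall (A B : Sys T) (a b : Tr A B) (l : list (Tr A B)),
      Test (a :: b :: l) -> Test (addT a b :: l);
  tr_ext : forall (A B : Sys T) (f g : Tr A B),
      (forall (E : Sys T) (Psi : Tr sI (sP A E)) (c : Tr (sP B E) sI),
          Ev Psi -> Ev c ->
          prob (comp c (comp (par f (idT E)) Psi)) =
          prob (comp c (comp (par g (idT E)) Psi))) -> f = g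
}.

(* strong causality: conditional tests + unique deterministic effect *)
Definition StrongCausal : Prop :=
  (forall (A B C : Sys T) (l : list (Tr A B)) (m : list (list (Tr B C))),
      Test l -> size m = size l ->
      (forall i, (i < size m)%N -> Test (nth [::] m i)) ->
      Test (flatten [seq [seq comp b p.1 | b <- p.2] | p <- zip l m])) /\
  (forall A : Sys T, exists e : Tr A sI, Test [:: e] /\
      forall e' : Tr A sI, Test [:: e'] -> e' = e).

Definition AllPurifiable : Prop :=
  forall (A : Sys T) (rho : Tr sI A), IsState rho ->
    exists (C : Sys T) (Phi : Tr sI (sP A C)), Purification rho Phi.

Definition EssUniqPurif : Prop :=
  forall (A : Sys T) (rho : Tr sI A),
    (exists (C : Sys T) (Phi : Tr sI (sP A C)), Purification rho Phi) ->
    forall (B : Sys T) (Phi Psi : Tr sI (sP A B)),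
      Purification rho Phi -> Purification rho Psi ->
      exists U : Tr B B, Reversible U /\ Psi = comp (par (idT A) U) Phi.

Definition AtomicParStates : Prop :=
  forall (A B : Sys T) (phi : Tr sI A) (psi : Tr sI B),
    Pure phi -> Pure psi -> Pure (stPar phi psi).

End Basic.

Arguments OPTlaws {R} T.
Arguments StrongCausal {R} T.
Arguments AllPurifiable {R} T.
Arguments EssUniqPurif {R} T.
Arguments AtomicParStates {R} T.

(* Part (i): a dilation Psi of rho can itself be purified, and reassociating that
   purification gives a purification of rho from which Psi is recovered by a channel
   acting only on the ancilla; such a channel commutes with C (x) I and fidelity does
   not decrease under channels, so the infimum over dilations is attained on
   purifications.
   Part (ii): for purifications Phi and Psi of rho, atomicity makes Phi (x) Psi and
   Psi (x) Phi pure; after reordering the ancillas both purify rho on the same system,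
   so essential uniqueness relates them by a reversible channel on the ancilla.  The
   chain Phi -> Phi (x) Psi -> Psi (x) Phi -> Psi consists of ancilla channels, hence
   F[Phi, (C (x) I)Phi] <= F[Psi, (C (x) I)Psi], and all purifications give the
   infimum. *)

From Pilot Require Import Defs. (* [comp] is the OPT composition, not ssrfun.comp *)
From mathcomp Require Import all_boot all_order all_algebra.
From mathcomp Require Import classical_sets reals.
From Stdlib Require List Permutation.
Import Defs.

Set Implicit Arguments.
Unset Strict Implicit.
Unset Printing Implicit Defensive.
Import Order.TTheory GRing.Theory Num.Theory.
Local Open Scope ring_scope.
Local Open Scope classical_set_scope.

Lemma In_allpairs (X Y Z : Type) (f : X -> Y -> Z) x y (l : seq X) (m : seq Y) :
  List.In x l -> List.In y m -> List.In (f x y) [seq f x y | x <- l, y <- m].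
Proof.
move=> hx hy; elim: l hx => //= a l IH [->|/IH h]; apply: List.in_or_app.
  by left; apply: List.in_map.
by right.
Qed.

Lemma allpairs_seq1r (X Y Z : Type) (f : X -> Y -> Z) (l : seq X) (b : Y) :
  [seq f x y | x <- l, y <- [:: b]] = [seq f x b | x <- l].
Proof. by elim: l => //= a l ->. Qed.

Lemma In_perm_cons (X : Type) (x : X) (l : seq X) :
  List.In x l -> exists r, Permutation.Permutation l (x :: r).
Proof.
move=> hx; have [l1 [l2 ->]] := List.in_split x l hx; exists (l1 ++ l2).
exact/Permutation.Permutation_sym/Permutation.Permutation_middle.
Qed.

Section NonnegSums.
Variables (R : numDomainType) (X : Type) (F : X -> R).

Lemma sum_In_ge0 (l : seq X) :
  (forall a, List.In a l -> 0 <= F a) -> 0 <= \sum_(a <- l) F a.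
Proof.
elim: l => [|a l IH] F0; first by rewrite big_nil.
rewrite big_cons addr_ge0 //; first by apply: F0; left.
by apply: IH => b hb; apply: F0; right.
Qed.

Lemma sum_In_eq0 (l : seq X) x :
  (forall a, List.In a l -> 0 <= F a) -> \sum_(a <- l) F a = 0 ->
  List.In x l -> F x = 0.
Proof.
elim: l => //= a l IH F0; rewrite big_cons => /eqP.
have Fl0 b : List.In b l -> 0 <= F b by move=> hb; apply: F0; right.
rewrite paddr_eq0 ?F0 ?sum_In_ge0 //; last by left.
by case/andP=> /eqP Fa0 /eqP suml0 [<-|hx] //; apply: IH.
Qed.

End NonnegSums.

Section Infima.
Variable R : realType.

Lemma inf_le_of_dominated (S S' : set R) :
  has_lbound S' -> nonempty S -> (forall x, S x -> exists2 y, S' y & y <= x) ->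
  inf S' <= inf S.
Proof.
move=> lbS' neS dom; apply: lb_le_inf => // x /dom [y S'y lyx].
exact: le_trans (ge_inf lbS' S'y) lyx.
Qed.

Lemma inf_eq_cofinal (S S' : set R) :
  S' `<=` S -> has_lbound S -> nonempty S' ->
  (forall x, S x -> exists2 y, S' y & y <= x) -> inf S = inf S'.
Proof.
move=> sub lbS [y S'y] dom; apply/le_anti/andP; split.
  by apply: inf_le_of_dominated => //; [exists y | move=> x /sub Sx; exists x].
apply: inf_le_of_dominated; last exact: dom.
  by case: lbS => c lbc; exists c => x /sub; apply: lbc.
by exists y; apply: sub.
Qed.

Lemma inf_eq_min (S : set R) c : S c -> lbound S c -> inf S = c.
Proof.
move=> Sc lbc; apply/le_anti/andP; split; first exact: ge_inf (ex_intro _ c lbc) _ Sc.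
by apply: lb_le_inf => //; exists c.
Qed.

End Infima.

Section OPTTheory.
Variables (R : realType) (T : OPTops R).
Hypothesis HT : OPTlaws T.

Local Notation Sys := (Sys T).
Local Notation Tr := (@Tr R T).
Local Notation I := (@sI R T).

Lemma channel_comp (X Y Z : Sys) (f : Tr X Y) (g : Tr Y Z) :
  IsChannel f -> IsChannel g -> IsChannel (comp g f).
Proof. by move=> hf hg; have := test_seq HT hf hg. Qed.

Lemma channel_par (X Y Z W : Sys) (f : Tr X Y) (g : Tr Z W) :
  IsChannel f -> IsChannel g -> IsChannel (par f g).
Proof. by move=> hf hg; have := test_par HT hf hg. Qed.

Lemma channel_par_idl (X Y Z : Sys) (f : Tr Y Z) :
  IsChannel f -> IsChannel (par (idT X) f).
Proof. exact/channel_par/test_id. Qed.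

Lemma par_idl_comp (X Y Z W : Sys) (g : Tr Z W) (f : Tr Y Z) :
  par (idT X) (comp g f) = comp (par (idT X) g) (par (idT X) f).
Proof. by rewrite -(par_comp HT) (comp1T HT). Qed.

Lemma par_idr_comp (X Y Z W : Sys) (g : Tr Z W) (f : Tr Y Z) :
  par (comp g f) (idT X) = comp (par g (idT X)) (par f (idT X)).
Proof. by rewrite -(par_comp HT) (comp1T HT). Qed.

Lemma par_split_lr (X Y Z W : Sys) (f : Tr X Y) (g : Tr Z W) :
  par f g = comp (par f (idT _)) (par (idT _) g).
Proof. by rewrite -(par_comp HT) (comp1T HT) (compT1 HT). Qed.

Lemma par_split_rl (X Y Z W : Sys) (f : Tr X Y) (g : Tr Z W) :
  par f g = comp (par (idT _) g) (par f (idT _)).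
Proof. by rewrite -(par_comp HT) (comp1T HT) (compT1 HT). Qed.

Lemma ruI_nat (X Y : Sys) (f : Tr X Y) :
  comp (ruI Y) f = comp (par f (idT I)) (ruI X).
Proof.
rewrite -{1}(compT1 HT f) -(ru_inv1 HT X) (compA HT (ruI X) (ru X) f) -(ru_nat HT).
by rewrite -(compA HT) (compA HT _ (ru Y) (ruI Y)) (ru_inv2 HT) (comp1T HT).
Qed.

Lemma ascI_nat (X X' Y Y' Z Z' : Sys) (f : Tr X X') (g : Tr Y Y') (h : Tr Z Z') :
  comp (ascI X' Y' Z') (par f (par g h)) = comp (par (par f g) h) (ascI X Y Z).
Proof.
rewrite -{1}(compT1 HT (par f (par g h))) -(asc_inv1 HT).
rewrite (compA HT (ascI _ _ _) (asc _ _ _)) -(asc_nat HT).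
by rewrite -(compA HT) (compA HT _ (asc _ _ _) (ascI _ _ _)) (asc_inv2 HT) (comp1T HT).
Qed.

Lemma prob_zero : prob (zeroT : Tr I I) = 0.
Proof.
have := prob_add HT zeroT zeroT.
by rewrite (add0T HT) -{1}[prob zeroT]addr0 => /addrI.
Qed.

Lemma prob_id : prob (idT I) = 1.
Proof. by have := prob_test HT (test_id HT I); rewrite big_cons big_nil addr0. Qed.

Lemma prob_sumT (X : Sys) (l : seq (Tr X I)) (s : Tr I X) :
  prob (comp (sumT l) s) = \sum_(a <- l) prob (comp a s).
Proof.
elim: l => [|a l IH] /=; first by rewrite big_nil (comp0l HT) prob_zero.
by rewrite big_cons (compDl HT) (prob_add HT) IH.
Qed.

Lemma sumT_comp (X Y Z : Sys) (N : Tr Y Z) (l : seq (Tr X Y)) :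
  sumT (map (comp N) l) = comp N (sumT l).
Proof. by elim: l => [|a l IH] /=; rewrite ?(comp0r HT) // IH (compDr HT). Qed.

Lemma coarse_grain_test (X Y : Sys) (a : Tr X Y) (l : seq (Tr X Y)) :
  Test (a :: l) -> IsChannel (sumT (a :: l)).
Proof.
elim: l a => [|b l IH] a /=; first by rewrite (addTC HT) (add0T HT).
by move=> /(test_cg HT) /IH; rewrite /= (addTA HT).
Qed.

Lemma channel_scalar (s : Tr I I) : IsChannel s -> s = idT I.
Proof.
move=> hs; apply: (prob_inj HT).
by have := prob_test HT hs; rewrite prob_id big_cons big_nil addr0.
Qed.

Lemma norm_channel_effect (X : Sys) (s : Tr I X) (e : Tr X I) :
  NormState s -> IsChannel e -> comp e s = idT I.
Proof. by move=> hs he; apply/channel_scalar/channel_comp. Qed.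

Lemma event_comp (X Y Z : Sys) (M : Tr Y Z) (s : Tr X Y) :
  IsChannel M -> Ev s -> Ev (comp M s).
Proof.
move=> hM [l [hl ins]]; exists [seq comp M f | f <- l]; split.
  by have := test_seq HT hl hM; rewrite allpairs_seq1r.
exact: List.in_map.
Qed.

Lemma rev_comp (X Y Z : Sys) (f : Tr X Y) (g : Tr Y Z) :
  Reversible f -> Reversible g -> Reversible (comp g f).
Proof.
move=> [hf [f' [hf' [e1 e2]]]] [hg [g' [hg' [e3 e4]]]].
split; first exact: channel_comp.
exists (comp f' g'); split; first exact: channel_comp.
split; first by rewrite (compA HT) -(compA HT g) e3 (compT1 HT) e1.
by rewrite (compA HT) -(compA HT f') e2 (compT1 HT) e4.
Qed.

Lemma rev_par_idl (X Y Z : Sys) (f : Tr X Y) :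
  Reversible f -> Reversible (par (idT Z) f).
Proof.
move=> [hf [f' [hf' [e1 e2]]]]; split; first exact: channel_par_idl.
exists (par (idT Z) f'); split; first exact: channel_par_idl.
by rewrite -!par_idl_comp e1 e2 !(par_id HT).
Qed.

Lemma rev_par_idr (X Y Z : Sys) (f : Tr X Y) :
  Reversible f -> Reversible (par f (idT Z)).
Proof.
move=> [hf [f' [hf' [e1 e2]]]]; split; first exact: channel_par hf (test_id HT Z).
exists (par f' (idT Z)); split; first exact: channel_par hf' (test_id HT Z).
by rewrite -!par_idr_comp e1 e2 !(par_id HT).
Qed.

Lemma rev_asc (X Y Z : Sys) : Reversible (asc X Y Z).
Proof.
split; first exact: (test_asc HT).
exists (ascI X Y Z); split; first exact: (test_ascI HT).
by rewrite (asc_inv1 HT) (asc_inv2 HT).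
Qed.

Lemma rev_ascI (X Y Z : Sys) : Reversible (ascI X Y Z).
Proof.
split; first exact: (test_ascI HT).
exists (asc X Y Z); split; first exact: (test_asc HT).
by rewrite (asc_inv1 HT) (asc_inv2 HT).
Qed.

Lemma rev_sw (X Y : Sys) : Reversible (sw X Y).
Proof.
split; first exact: (test_sw HT).
by exists (sw Y X); split; [exact: (test_sw HT) | rewrite !(sw_inv HT)].
Qed.

Lemma pure_rev (P Q : Sys) (M : Tr P Q) (s : Tr I P) :
  Reversible M -> Pure s -> Pure (comp M s).
Proof.
move=> [hM [N [hN [e1 e2]]]] [hs pure_s]; split; first exact: event_comp.
move=> l m hl hsum sg insg.
have hNl : Test (map (comp N) l) by have := test_seq HT hl hN; rewrite allpairs_seq1r.
have hNsum : sumT (mask m (map (comp N) l)) = s.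
  by rewrite -map_mask sumT_comp hsum (compA HT) e1 (comp1T HT).
have [lam hlam] := pure_s _ _ hNl hNsum (comp N sg) ltac:(by rewrite -map_mask; apply: List.in_map).
by exists lam; rewrite -(comp1T HT sg) -e2 -(compA HT) hlam (compZr HT).
Qed.

Definition ancilla_swap (B X E : Sys) : Tr (sP B (sP X E)) (sP E (sP X B)) :=
  comp (par (idT E) (sw B X)) (comp (asc E B X) (comp (par (sw B E) (idT X))
    (comp (ascI B E X) (par (idT B) (sw X E))))).

Lemma rev_ancilla_swap (B X E : Sys) : Reversible (ancilla_swap B X E).
Proof.
have rev_sw_idl (Y Z W : Sys) : Reversible (par (idT W) (sw Y Z)).
  by apply: rev_par_idl; apply: rev_sw.
apply: rev_comp => //; apply: rev_comp; last exact: rev_asc.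
apply: rev_comp; last by apply: rev_par_idr; apply: rev_sw.
by apply: rev_comp => //; apply: rev_ascI.
Qed.

Hypothesis HSC : StrongCausal T.

Lemma det_effect_unique (X : Sys) (e1 e2 : Tr X I) :
  IsChannel e1 -> IsChannel e2 -> e1 = e2.
Proof. by move=> h1 h2; have [e [_ He]] := HSC.2 X; rewrite (He _ h1) (He _ h2). Qed.

Lemma luI_ruI : luI I = ruI I.
Proof.
have lu_ru : lu I = ru I by apply: det_effect_unique; [apply: test_lu | apply: test_ru].
by rewrite -[luI I](comp1T HT) -(ru_inv2 HT) -(compA HT) -lu_ru (lu_inv1 HT) (compT1 HT).
Qed.

(* Every outcome probability involving x sums, over a test, to the probability of
   the deterministic effect, which vanishes; tr_ext then identifies x with zero. *)
Lemma state_eq0_of_norm0 (P : Sys) (x : Tr I P) (e : Tr P I) :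
  Ev x -> IsChannel e -> prob (comp e x) = 0 -> x = zeroT.
Proof.
move=> [lx [hlx inx]] he hex.
have ex0 : comp e x = zeroT by apply: (prob_inj HT); rewrite hex prob_zero.
apply: (tr_ext HT) => E Psi c [lP [hlP inP]] [[//|a l] [hlc inc]] //.
rewrite (par0l HT) (comp0l HT) (comp0r HT) prob_zero.
set s := comp (par x (idT E)) Psi.
have hls := test_seq HT hlP (test_par HT hlx (test_id HT E)).
have ins : List.In s _ := In_allpairs (fun f g => comp g f) inP
  (In_allpairs (fun f g => par f g) inx (or_introl erefl : List.In (idT E) [:: idT E])).
have hlsc := test_seq HT hls hlc.
have [eE [heE _]] := HSC.2 E.
have sum_det : sumT (a :: l) = comp (lu I) (par e eE).
  exact: det_effect_unique (coarse_grain_test hlc)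
    (channel_comp (channel_par he heE) (test_lu HT I)).
have sum0 : \sum_(b <- a :: l) prob (comp b s) = 0.
  rewrite -prob_sumT sum_det -(compA HT) /s (compA HT Psi) -(par_comp HT) ex0.
  by rewrite (par0l HT) (comp0l HT) (comp0r HT) prob_zero.
apply: (sum_In_eq0 _ sum0 inc) => b hb; apply: (prob_ge0 HT).
by eexists; split; [exact: hlsc | exact: (In_allpairs (fun f g => comp g f) ins hb)].
Qed.

(* The other outcomes of a test containing s have zero probability, hence vanish,
   and coarse-graining the test yields the singleton test [s]. *)
Lemma norm_state_of_norm1 (P : Sys) (s : Tr I P) (e : Tr P I) :
  Ev s -> IsChannel e -> comp e s = idT I -> NormState s.
Proof.
move=> [l0 [hl0 ins]] he hes.
have [r hr] := In_perm_cons ins.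
have hsr := test_perm HT hl0 hr.
have hsre := test_seq HT hsr he; rewrite allpairs_seq1r in hsre.
have sum_r : \sum_(x <- r) prob (comp e x) = 0.
  have := prob_test HT hsre; rewrite big_map big_cons hes.
  by rewrite prob_id => h; apply: (addrI 1); rewrite h addr0.
have r0 x : List.In x r -> x = zeroT.
  move=> hx; apply: (state_eq0_of_norm0 _ he); first by exists (s :: r); split => //; right.
  apply: (sum_In_eq0 _ sum_r hx) => b hb; apply: (prob_ge0 HT).
  by eexists; split; [exact: hsre | right; apply: List.in_map].
have sumr0 : sumT r = zeroT.
  elim: r r0 {hr hsr hsre sum_r} => //= a r IH r0.
  by rewrite IH ?(r0 a (or_introl erefl)) ?(add0T HT) // => x hx; apply: r0; right.
by have := coarse_grain_test hsr; rewrite /= sumr0 (addTC HT) (add0T HT).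
Qed.

Lemma fidelity_ge0 (P : Sys) (X Y : Tr I P) : 0 <= fidelity X Y.
Proof.
have [e [he _]] := HSC.2 P; apply: lb_le_inf.
  by exists (\sum_(a <- [:: e]) Num.sqrt (pairing a X * pairing a Y)), [:: e].
by move=> _ [l [_ ->]]; apply: sumr_ge0 => a _; apply: sqrtr_ge0.
Qed.

Lemma fidelity_channel_mono (P Q : Sys) (g : Tr P Q) (X Y : Tr I P) :
  IsChannel g -> fidelity X Y <= fidelity (comp g X) (comp g Y).
Proof.
move=> hg; apply: inf_le_of_dominated.
- by exists 0 => _ [l [_ ->]]; apply: sumr_ge0 => a _; apply: sqrtr_ge0.
- have [e [he _]] := HSC.2 Q.
  by exists (\sum_(a <- [:: e]) Num.sqrt (pairing a (comp g X) * pairing a (comp g Y))), [:: e].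
move=> _ [l [hl ->]].
exists (\sum_(a <- [seq comp a g | a <- l]) Num.sqrt (pairing a X * pairing a Y)).
  exists [seq comp a g | a <- l]; split => //.
  by have := test_seq HT hg hl; rewrite /= cats0.
by rewrite big_map /pairing; under eq_bigr => a _ do rewrite -!(compA HT).
Qed.

Definition trace_out (Y Q : Sys) (e : Tr Q I) : Tr (sP Y Q) Y :=
  comp (ru Y) (par (idT Y) e).

Definition discard_last (X E F : Sys) (eF : Tr F I) : Tr (sP X (sP E F)) (sP X E) :=
  comp (trace_out (sP X E) eF) (ascI X E F).

Definition append (Y Q : Sys) (psi : Tr I Q) : Tr Y (sP Y Q) :=
  comp (par (idT Y) psi) (ruI Y).

Lemma trace_out_comp (Y Q : Sys) (e : Tr Q I) (Z : Tr I (sP Y Q)) :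
  comp (trace_out Y e) Z = comp (ru Y) (comp (par (idT Y) e) Z).
Proof. by rewrite (compA HT). Qed.

Lemma channel_trace_out (Y Q : Sys) (e : Tr Q I) :
  IsChannel e -> IsChannel (trace_out Y e).
Proof. by move=> he; apply: channel_comp (test_ru HT Y); apply: channel_par_idl. Qed.

Lemma channel_discard_last (X E F : Sys) (eF : Tr F I) :
  IsChannel eF -> IsChannel (discard_last X E eF).
Proof. by move=> he; apply: channel_comp (channel_trace_out _ he); apply: test_ascI. Qed.

Lemma channel_append (Y Q : Sys) (psi : Tr I Q) :
  NormState psi -> IsChannel (append Y psi).
Proof. by move=> hpsi; apply: channel_comp (channel_par_idl _ hpsi); apply: test_ruI. Qed.

Lemma trace_out_asc (X C D : Sys) (eC : Tr C I) (eD : Tr D I) (e : Tr (sP C D) I) :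
  IsChannel eC -> IsChannel eD -> IsChannel e ->
  comp (trace_out X e) (asc X C D) = comp (trace_out X eC) (trace_out (sP X C) eD).
Proof.
move=> heC heD he.
have -> : e = comp eD (comp (lu D) (par eC (idT D))).
  apply: det_effect_unique he (channel_comp _ heD).
  exact: channel_comp (channel_par heC (test_id HT D)) (test_lu HT D).
rewrite /trace_out !par_idl_comp -!(compA HT) -(asc_nat HT).
rewrite (compA HT (par (par (idT X) eC) (idT D)) (asc X I D) (par (idT X) (lu D))).
rewrite (triangle HT) -(par_idr_comp _ (ru X) (par (idT X) eC)).
by rewrite -par_split_rl par_split_lr (compA HT) (ru_nat HT) -!(compA HT).
Qed.

Lemma discard_last_asc (X E F : Sys) (eF : Tr F I) :
  comp (discard_last X E eF) (asc X E F) = trace_out (sP X E) eF.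
Proof. by rewrite /discard_last -(compA HT) (asc_inv2 HT) (compT1 HT). Qed.

Lemma append_nat (Y Y' Q : Sys) (psi : Tr I Q) (f : Tr Y Y') :
  comp (append Y' psi) f = comp (par f (idT Q)) (append Y psi).
Proof.
rewrite /append -(compA HT) ruI_nat (compA HT _ _ (par (idT Y') psi)).
by rewrite -par_split_rl par_split_lr -(compA HT).
Qed.

Lemma stPar_append (X Q : Sys) (phi : Tr I X) (psi : Tr I Q) :
  stPar phi psi = comp (append X psi) phi.
Proof.
by rewrite append_nat /stPar /append (compA HT) -par_split_lr luI_ruI.
Qed.

Lemma trace_out_append (Y Q : Sys) (psi : Tr I Q) (e : Tr Q I) :
  comp e psi = idT I -> comp (trace_out Y e) (append Y psi) = idT Y.
Proof.
move=> hpsi; rewrite /trace_out /append -(compA HT) (compA HT _ (par (idT Y) psi)).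
by rewrite -par_idl_comp hpsi (par_id HT) (comp1T HT) (ru_inv1 HT).
Qed.

Definition commutes_local (X B E : Sys) (Ch : Tr X X) (g : Tr (sP X B) (sP X E)) :
  Prop := comp g (par Ch (idT B)) = comp (par Ch (idT E)) g.

Section CommutesLocal.
Variables (X : Sys) (Ch : Tr X X).

Lemma commutes_local_comp (B E F : Sys) (g1 : Tr (sP X B) (sP X E))
    (g2 : Tr (sP X E) (sP X F)) :
  commutes_local Ch g1 -> commutes_local Ch g2 -> commutes_local Ch (comp g2 g1).
Proof.
by move=> h1 h2; rewrite /commutes_local -(compA HT) h1 (compA HT) h2 (compA HT).
Qed.

Lemma commutes_local_par_idl (B E : Sys) (M : Tr B E) :
  commutes_local Ch (par (idT X) M).
Proof. by rewrite /commutes_local -!(par_comp HT) !(comp1T HT) !(compT1 HT). Qed.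

Lemma commutes_local_discard_last (E F : Sys) (eF : Tr F I) :
  commutes_local Ch (discard_last X E eF).
Proof.
rewrite /commutes_local /discard_last /trace_out -(par_id HT E F) -!(compA HT) ascI_nat.
rewrite (compA HT (ascI X E F)) -par_split_rl par_split_lr -(compA HT).
by rewrite (compA HT _ _ (ru _)) (ru_nat HT) -!(compA HT).
Qed.

Lemma commutes_local_asc_append (B Q : Sys) (psi : Tr I Q) :
  commutes_local Ch (comp (asc X B Q) (append (sP X B) psi)).
Proof.
rewrite /commutes_local -(compA HT) append_nat (compA HT _ _ (asc X B Q)).
by rewrite (asc_nat HT) (par_id HT) (compA HT).
Qed.

Lemma corrfid_mono (B E : Sys) (Phi : Tr I (sP X B)) (g : Tr (sP X B) (sP X E)) :
  IsChannel g -> commutes_local Ch g ->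
  fidelity Phi (applyA Ch Phi) <= fidelity (comp g Phi) (applyA Ch (comp g Phi)).
Proof.
move=> hg hcomm; have := fidelity_channel_mono Phi (applyA Ch Phi) hg.
by rewrite /applyA (compA HT Phi g) -hcomm -(compA HT).
Qed.

End CommutesLocal.

Lemma dilation_asc (X C D : Sys) (rho : Tr I X) (Psi : Tr I (sP X C))
    (Psi' : Tr I (sP (sP X C) D)) :
  Dilation rho Psi -> Dilation Psi Psi' -> Dilation rho (comp (asc X C D) Psi').
Proof.
move=> [_ [eC [heC hC]]] [hPsi' [eD [heD hD]]].
rewrite -trace_out_comp in hC; rewrite -trace_out_comp in hD.
split; first exact: event_comp (test_asc HT _ _ _) hPsi'.
have [e [he _]] := HSC.2 (sP C D); exists e; split => //.
by rewrite -trace_out_comp (compA HT) (trace_out_asc _ heC heD he) -(compA HT) hD.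
Qed.

Lemma dilation_append (Y Q : Sys) (Z : Tr I Y) (psi : Tr I Q) :
  Ev Z -> NormState psi -> Dilation Z (comp (append Y psi) Z).
Proof.
move=> hZ hpsi; split; first exact: event_comp (channel_append _ hpsi) hZ.
have [e [he _]] := HSC.2 Q; exists e; split => //.
by rewrite -trace_out_comp (compA HT) trace_out_append ?(comp1T HT) ?norm_channel_effect.
Qed.

Lemma dilation_local (X S S' : Sys) (rho : Tr I X) (Z : Tr I (sP X S)) (N : Tr S S') :
  Dilation rho Z -> IsChannel N -> Dilation rho (comp (par (idT X) N) Z).
Proof.
move=> [hZ [eS [heS hS]]] hN.
split; first exact: event_comp (channel_par_idl _ hN) hZ.
have [e [he _]] := HSC.2 S'; exists e; split => //.
have eSN : eS = comp e N by apply: det_effect_unique heS (channel_comp hN he).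
by rewrite (compA HT Z) -par_idl_comp -eSN.
Qed.

Lemma dilation_norm_state (X Y : Sys) (rho : Tr I X) (Phi : Tr I (sP X Y)) :
  NormState rho -> Dilation rho Phi -> NormState Phi.
Proof.
move=> hr [hPhi [eY [heY hd]]]; rewrite -trace_out_comp in hd.
have [e [he _]] := HSC.2 (sP X Y); apply: (norm_state_of_norm1 hPhi he).
have [eX [heX _]] := HSC.2 X.
have -> : e = comp eX (trace_out X eY).
  exact: det_effect_unique he (channel_comp (channel_trace_out _ heY) heX).
by rewrite -(compA HT) hd norm_channel_effect.
Qed.

Lemma purification_local (X S S' : Sys) (rho : Tr I X) (Z : Tr I (sP X S))
    (N : Tr S S') :
  Purification rho Z -> Reversible N -> Purification rho (comp (par (idT X) N) Z).
Proof.
move=> [dZ pZ] hN; split; first exact: dilation_local dZ hN.1.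
exact: pure_rev (rev_par_idl _ hN) pZ.
Qed.

Lemma purification_asc (X C D : Sys) (rho : Tr I X) (Psi : Tr I (sP X C))
    (Psi' : Tr I (sP (sP X C) D)) :
  Dilation rho Psi -> Purification Psi Psi' ->
  Purification rho (comp (asc X C D) Psi').
Proof.
move=> dPsi [dPsi' pPsi']; split; first exact: dilation_asc dPsi dPsi'.
exact: pure_rev (rev_asc _ _ _) pPsi'.
Qed.

Lemma purification_append (X B Q : Sys) (rho : Tr I X) (Phi : Tr I (sP X B))
    (psi : Tr I Q) :
  AtomicParStates T -> Purification rho Phi -> NormState psi -> Pure psi ->
  Purification rho (comp (comp (asc X B Q) (append (sP X B) psi)) Phi).
Proof.
move=> hAt [dPhi pPhi] npsi ppsi; rewrite -(compA HT); split.
  exact: dilation_asc dPhi (dilation_append dPhi.1 npsi).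
by apply: pure_rev (rev_asc _ _ _) _; rewrite -stPar_append; apply: hAt.
Qed.

Lemma purification_corrfid_le_dilation (X C : Sys) (rho : Tr I X) (Ch : Tr X X)
    (Psi : Tr I (sP X C)) :
  AllPurifiable T -> Dilation rho Psi ->
  exists (D : Sys) (Phi : Tr I (sP X D)), Purification rho Phi /\
    fidelity Phi (applyA Ch Phi) <= fidelity Psi (applyA Ch Psi).
Proof.
move=> hAP dPsi; have [D [Psi' pPsi']] := hAP _ Psi dPsi.1.
exists (sP C D), (comp (asc X C D) Psi'); split; first exact: purification_asc dPsi pPsi'.
have [_ [eD [heD hD]]] := pPsi'.1; rewrite -trace_out_comp in hD.
have := corrfid_mono (comp (asc X C D) Psi') (channel_discard_last X C heD)
  (commutes_local_discard_last Ch C eD).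
by rewrite (compA HT) discard_last_asc hD.
Qed.

Lemma purification_corrfid_le (X B E : Sys) (rho : Tr I X) (Ch : Tr X X)
    (Phi : Tr I (sP X B)) (Psi : Tr I (sP X E)) :
  NormState rho -> EssUniqPurif T -> AtomicParStates T ->
  Purification rho Phi -> Purification rho Psi ->
  fidelity Phi (applyA Ch Phi) <= fidelity Psi (applyA Ch Psi).
Proof.
move=> hr hEU hAt pPhi pPsi.
have nPhi := dilation_norm_state hr pPhi.1.
have nPsi := dilation_norm_state hr pPsi.1.
set gX := comp (par (idT X) (ancilla_swap B X E))
  (comp (asc X B (sP X E)) (append (sP X B) Psi)).
set gY := comp (asc X E (sP X B)) (append (sP X E) Phi).
have pX : Purification rho (comp gX Phi).
  rewrite /gX -(compA HT); apply: purification_local (rev_ancilla_swap _ _ _).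
  exact: purification_append pPhi nPsi pPsi.2.
have pY : Purification rho (comp gY Psi) by exact: purification_append pPsi nPhi pPhi.2.
have [U [hU eY]] := hEU X rho (ex_intro _ _ (ex_intro _ _ pX)) _ _ _ pX pY.
have [eXB [heXB _]] := HSC.2 (sP X B).
have chX : IsChannel gX.
  apply: channel_comp (channel_par_idl _ (rev_ancilla_swap _ _ _).1).
  exact: channel_comp (channel_append _ nPsi) (test_asc HT _ _ _).
have comX : commutes_local Ch gX.
  exact: commutes_local_comp (commutes_local_asc_append Ch B Psi)
    (commutes_local_par_idl Ch _).
apply: le_trans (corrfid_mono Phi chX comX) _.
apply: le_trans (corrfid_mono _ (channel_par_idl _ hU.1) (commutes_local_par_idl Ch U)) _.
rewrite -eY; apply: le_trans (corrfid_mono _ (channel_discard_last X E heXB)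
  (commutes_local_discard_last Ch E eXB)) _.
rewrite (compA HT Psi gY) /gY (compA HT _ _ (discard_last X E eXB)) discard_last_asc.
by rewrite trace_out_append ?(comp1T HT) ?norm_channel_effect.
Qed.

End OPTTheory.

Theorem mainTheorem12 (R : realType) (T : OPTops R) (HT : OPTlaws T)
  (HSC : StrongCausal T) (A : Sys T) (rho : Tr sI A) (Ch : Tr A A) :
  NormState rho -> IsChannel Ch ->
  (AllPurifiable T -> corrFid rho Ch = corrFidPur rho Ch) /\
  (AllPurifiable T -> EssUniqPurif T -> AtomicParStates T ->
     forall (B : Sys T) (Phi : Tr sI (sP A B)), Purification rho Phi ->
       corrFid rho Ch = (fidelity Phi (applyA Ch Phi)) ^+ 2).
Proof.
move=> hr _. (* the argument never uses that C is a channel *)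
have rho_state : IsState rho by exists [:: rho]; split => //; left.
have sqr_le a b : 0 <= a -> a <= b -> a ^+ 2 <= b ^+ 2.
  by move=> a0 ab; rewrite (ler_pXn2r _) ?nnegrE // (le_trans a0 ab).
have sqr_lbound (S : set R) : (forall x, S x -> exists y : R, x = y ^+ 2) -> has_lbound S.
  by move=> hS; exists 0 => _ /hS [y ->]; apply: sqr_ge0.
split=> [hAP|hAP hEU hAt B Phi pPhi].
  apply: inf_eq_cofinal.
  - by move=> _ [C [Phi [pPhi ->]]]; exists C, Phi; split => //; apply: pPhi.1.
  - by apply: sqr_lbound => _ [C [Psi [_ ->]]]; eexists.
  - have [C [Phi pPhi]] := hAP _ rho rho_state.
    by exists (fidelity Phi (applyA Ch Phi) ^+ 2), C, Phi.
  move=> _ [C [Psi [dPsi ->]]].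
  have [D [Phi [pPhi le_Phi]]] := purification_corrfid_le_dilation HT HSC Ch hAP dPsi.
  by exists (fidelity Phi (applyA Ch Phi) ^+ 2); [exists D, Phi | apply: sqr_le; rewrite ?fidelity_ge0].
apply: inf_eq_min; first by exists B, Phi; split => //; apply: pPhi.1.
move=> _ [C [Psi [dPsi ->]]].
have [D [Phi' [pPhi' le_Phi']]] := purification_corrfid_le_dilation HT HSC Ch hAP dPsi.
apply: sqr_le; first exact: fidelity_ge0.
exact: le_trans (purification_corrfid_le HT HSC Ch hr hEU hAt pPhi pPhi') le_Phi'.
Qed.
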